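(* Let $\epsilon>0$, $M\ge1$, and let $h^{\mathrm{Dir}}$ be the solution of the Dirichlet problem on ${\mathbb T}^{(M)}$ with the boundary condition $u$ below. Then $$\epsilon^2\,\frac{2^{2M-6}}{(1-2^{-M})^2}\le S_{\mathrm{spr}}(h^{\mathrm{Dir}},{\mathbb T}^{(M)})\le\epsilon^2\,\frac{(2^{M-1}+\tfrac12)^2}{1-2^{-M}}.$$
   Context: Binary tree: for $n\ge0$, $\{0,1\}^n$ is the set of vertices of generation $n$ (words $z=z_1\cdots z_n$; generation $0$ is the root $\emptyset$). For a vertex $z$ of generation $n$, its children are $z0,z1$, and for $0\le m\le n$, $z^{(m)}=z_1\cdots z_m$ is its ancestor in generation $m$. ${\mathbb T}^{(M)}$ is the tree of generations $0,\dots,M$. $S_{\mathrm{spr}}(h,{\mathbb T}^{(M)})=\tfrac12\sum_{n=0}^{M-1}\sum_{z\in\{0,1\}^n}\big[(h(z0)-h(z))^2+(h(z1)-h(z))^2\big]$. Dirichlet problem: given $M\ge1$ and $u:\{0,1\}^M\to\mathbb R$, its solution is the unique $h$ on the vertices of ${\mathbb T}^{(M)}$ with $h(\emptyset)=0$, $h(z)=u(z)$ for $z\in\{0,1\}^M$, and $h(z0)+h(z1)+h(z^{(n-1)})=3h(z)$ for all $z\in\{0,1\}^n$, $1\le n<M$. Boundary condition: $u(z)=\epsilon\sum_{\ell=2}^M2^{M-\ell}z_\ell+\tfrac12\epsilon$ if $z_1=1$, and $u(z)=-\epsilon\sum_{\ell=2}^M2^{M-\ell}z_\ell-\tfrac12\epsilon$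 if $z_1=0$. *)

From HB Require Import structures.
From mathcomp Require Import all_boot all_order all_algebra.
Set Implicit Arguments. Unset Strict Implicit. Unset Printing Implicit Defensive.
Import Order.TTheory GRing.Theory Num.Theory.
Local Open Scope ring_scope.

(* Vertices of the binary tree are words z : seq bool; generation n = words of
   size n, enumerated as n.-tuple bool.  The root is [::]; the children of z
   are rcons z false (z0) and rcons z true (z1); the ancestor of z in
   generation m is take m z. *)

Section Tree.
Variable R : realFieldType.

Definition S_spr (M : nat) (h : seq bool -> R) : R :=
  2^-1 * \sum_(n < M) \sum_(z : n.-tuple bool)
    ((h (rcons z false) - h z) ^+ 2 + (h (rcons z true) - h z) ^+ 2).

Definition is_dirichlet_solution (M : nat) (u h : seq bool -> R) : Prop :=
  [/\ h [::] = 0,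
      (forall z : M.-tuple bool, h z = u z) &
      (forall (n : nat), (1 <= n < M)%N -> forall z : n.-tuple bool,
          h (rcons z false) + h (rcons z true) + h (take n.-1 z) = 3 * h z)].

(* letter z_l (1-indexed) of the word z *)
Definition letter (z : seq bool) (l : nat) : R := (nth false z l.-1 : nat)%:R.

Definition bdry_u (eps : R) (M : nat) (z : seq bool) : R :=
  let s := \sum_(2 <= l < M.+1) (2 ^+ (M - l)) * letter z l in
  if nth false z 0 then eps * s + 2^-1 * eps else - (eps * s) - 2^-1 * eps.

End Tree.

(* The solution h is harmonic at the interior vertices, so by the Dirichlet
   principle its energy is at most that of any function with the same values at
   the root and the leaves; the upper bound is the energy of the function equal
   to u on every non-root vertex.  For the lower bound, phi(w) = sign(w) 2^-|w|
   obeys Kirchhoff's node law at the interior vertices, so summation by parts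
   turns its flux (phi, grad h) into the leaf sum (phi, u) = eps 2^(M-2); since
   (phi, phi) = 1 - 2^-M, Cauchy-Schwarz gives
   energy(h) >= eps^2 4^(M-2) / (1 - 2^-M), which implies the stated bound. *)

From HB Require Import structures.
From mathcomp Require Import all_boot all_order all_algebra.
From mathcomp Require Import ring lra zify.
Set Implicit Arguments. Unset Strict Implicit. Unset Printing Implicit Defensive.
Import Order.TTheory GRing.Theory Num.Theory.
Local Open Scope ring_scope.

Lemma sum_tuple_rcons (V : nmodType) (T : finType) n (F : seq T -> V) :
  \sum_(w : n.+1.-tuple T) F w = \sum_(z : n.-tuple T) \sum_(b : T) F (rcons z b).
Proof.
rewrite pair_big /= (reindex (fun p : n.-tuple T * T => [tuple of rcons p.1 p.2])) //=.
exists (fun w => ([tuple of belast (thead w) (behead w)], last (thead w) (behead w)))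
  => [[z b] _ | w _]; last by apply: val_inj; rewrite /= -lastI; case: w => [[|x s]].
have -> : thead [tuple of rcons z b] = head b z.
  by rewrite /thead (tnth_nth b); case: z => [[]].
by case: z => [[|x s] ?]; congr pair; try apply: val_inj; rewrite /= ?belast_rcons ?last_rcons.
Qed.

Lemma cauchy_schwarz (R : realFieldType) (I : finType) (P : pred I) (f g : I -> R) :
  (\sum_(i | P i) f i * g i) ^+ 2
    <= (\sum_(i | P i) f i ^+ 2) * (\sum_(i | P i) g i ^+ 2).
Proof.
set X := \sum_(i | P i) f i * g i; set F := \sum_(i | P i) f i ^+ 2.
set G := \sum_(i | P i) g i ^+ 2.
have G_ge0 : 0 <= G by rewrite sumr_ge0 // => i _; rewrite sqr_ge0.
have [G0 | G_neq0] := eqVneq G 0.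
  have g0 i : P i -> g i = 0.
    by move=> Pi; apply/eqP; rewrite -sqrf_eq0 (psumr_eq0P _ G0) // => j _; rewrite sqr_ge0.
  by rewrite G0 mulr0 /X big1 ?expr0n // => i /g0 ->; rewrite mulr0.
have G_gt0 : 0 < G by rewrite lt_def G_neq0.
pose L := X / G.
have : 0 <= \sum_(i | P i) (f i - L * g i) ^+ 2 by rewrite sumr_ge0 // => i _; rewrite sqr_ge0.
have -> : \sum_(i | P i) (f i - L * g i) ^+ 2 = F - X ^+ 2 / G.
  rewrite (eq_bigr (fun i => f i ^+ 2 - 2 * L * (f i * g i) + L ^+ 2 * g i ^+ 2)); last first.
    by move=> i _; ring.
  rewrite big_split sumrB /= -!mulr_sumr /L -/X -/F -/G; field; exact: G_neq0.
by rewrite subr_ge0 ler_pdivrMr.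
Qed.

Section TreeCalculus.
Variable T : finType.

Definition parent (w : seq T) : seq T := take (size w).-1 w.

Lemma parent_rcons (z : seq T) b : parent (rcons z b) = z.
Proof. by rewrite /parent size_rcons -cats1 take_size_cat. Qed.

Section Ring.
Variable R : comPzRingType.
Implicit Types (f h d : seq T -> R).

Definition grad h (w : seq T) : R := h w - h (parent w).

(* An edge of T^(M) is identified with its lower endpoint, a vertex of
   generation 1..M. *)
Definition edge_sum (M : nat) (F : seq T -> R) : R :=
  \sum_(n < M) \sum_(w : n.+1.-tuple T) F w.

Definition energy M h : R := edge_sum M (fun w => grad h w ^+ 2).

Definition kirchhoff M f : Prop :=
  forall n, (0 < n < M)%N -> forall z : n.-tuple T, \sum_(b : T) f (rcons z b) = f z.

Lemma edge_sumE M (F : seq T -> R) :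
  edge_sum M F = \sum_(e : {n : 'I_M & n.+1.-tuple T}) F (tagged e).
Proof.
exact: (sig_big_dep (J := fun n : 'I_M => n.+1.-tuple T)
          xpredT (fun _ => xpredT) (fun _ w => F w)).
Qed.

Lemma edge_sum_mul_grad M f d : kirchhoff M f -> d [::] = 0 ->
  edge_sum M (fun w => f w * grad d w) = \sum_(w : M.-tuple T) f w * d w.
Proof.
move=> f_kirchhoff d_root.
pose A n := \sum_(w : n.-tuple T) f w * d w.
pose B n := \sum_(z : n.-tuple T) (\sum_(b : T) f (rcons z b)) * d z.
have AB n : (n < M)%N -> A n = B n.
  case: n => [|n] ltnM; first by rewrite /A /B !big1 // => w _; rewrite tuple0 d_root mulr0.
  by apply: eq_bigr => z _; rewrite f_kirchhoff.
have A0 : A 0%N = 0 by rewrite /A big1 // => w _; rewrite tuple0 d_root mulr0.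
transitivity (A M - A 0%N); last by rewrite A0 subr0.
rewrite -(telescope_sumr_eq A (fun n => A n.+1 - B n)) //; last first.
  by move=> n /andP[_ ltnM]; rewrite (AB n).
rewrite big_mkord; apply: eq_bigr => n _.
rewrite /A /B (sum_tuple_rcons _ (fun w => f w * grad d w)).
rewrite (sum_tuple_rcons _ (fun w => f w * d w)) -sumrB; apply: eq_bigr => z _.
by rewrite mulr_suml -sumrB; apply: eq_bigr => b _; rewrite /grad parent_rcons mulrBr.
Qed.
End Ring.

Lemma dirichlet_principle (R : realDomainType) M (h g : seq T -> R) :
  kirchhoff M (grad h) -> g [::] = h [::] -> (forall w : M.-tuple T, g w = h w) ->
  energy M h <= energy M g.
Proof.
move=> h_harmonic eq_root eq_leaves; pose d w := g w - h w.
have cross : edge_sum M (fun w => grad h w * grad d w) = 0.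
  rewrite edge_sum_mul_grad ?big1 // => [w _|]; first by rewrite /d eq_leaves subrr mulr0.
  by rewrite /d eq_root subrr.
rewrite -[energy M h]addr0 -(mulr0 2) -cross /energy !edge_sumE mulr_sumr -big_split.
apply: ler_sum => e _; set w := tagged e; rewrite -subr_ge0.
have -> : grad g w ^+ 2 - (grad h w ^+ 2 + 2 * (grad h w * grad d w)) = grad d w ^+ 2.
  by rewrite /grad /d; ring.
exact: sqr_ge0.
Qed.

Lemma edge_sum_cauchy_schwarz (R : realFieldType) M (f g : seq T -> R) :
  edge_sum M (fun w => f w * g w) ^+ 2
    <= edge_sum M (fun w => f w ^+ 2) * edge_sum M (fun w => g w ^+ 2).
Proof. by rewrite !edge_sumE; apply: cauchy_schwarz. Qed.

End TreeCalculus.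

Section BinaryTree.
Variable R : realFieldType.

Lemma sum_expr2 n : \sum_(i < n) (2 : R) ^+ i = 2 ^+ n - 1.
Proof. by rewrite subrX1 (_ : 2 - 1 = 1 :> R) ?mul1r //; ring. Qed.

Lemma sum_bool_tuple_const n (c : R) : \sum_(w : n.-tuple bool) c = 2 ^+ n * c.
Proof. by rewrite sumr_const card_tuple card_bool -natrX mulr_natl. Qed.

Lemma sum_bool_tuple_nth n k : (k < n)%N ->
  \sum_(t : n.-tuple bool) ((nth false t k : nat)%:R : R) = 2 ^+ n.-1.
Proof.
elim: n => // n IHn; rewrite ltnS leq_eqVlt => /orP[/eqP-> | lt_kn].
  rewrite (sum_tuple_rcons _ (fun t => ((nth false t n : nat)%:R : R))).
  rewrite -[RHS]mulr1 -sum_bool_tuple_const; apply: eq_bigr => z _.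
  by rewrite big_bool /= !nth_rcons size_tuple ltnn eqxx addr0.
rewrite (sum_tuple_rcons _ (fun t => ((nth false t k : nat)%:R : R))).
rewrite (eq_bigr (fun z : n.-tuple bool => 2 * (nth false z k : nat)%:R)); last first.
  by move=> z _; rewrite big_bool /= !nth_rcons size_tuple lt_kn; ring.
by rewrite -mulr_sumr IHn //; case: n lt_kn {IHn} => // n _; rewrite exprS.
Qed.

Lemma sum_geometric_half M : \sum_(n < M) (2 : R) ^- n.+1 = 1 - 2 ^- M.
Proof.
rewrite -(big_mkord xpredT (fun n => (2 : R) ^- n.+1)).
rewrite (telescope_sumr_eq (fun n => - (2 : R) ^- n)) ?expr0 ?invr1 ?opprK 1?addrC //.
by move=> n _; rewrite exprS invfM opprK; field; rewrite expf_neq0 // pnatr_eq0.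
Qed.

Definition sign (w : seq bool) : R := if nth false w 0 then 1 else -1.

Lemma sign_rcons (z : seq bool) b : (0 < size z)%N -> sign (rcons z b) = sign z.
Proof. by move=> z_gt0; rewrite /sign nth_rcons z_gt0. Qed.

Lemma sqr_sign w : sign w ^+ 2 = 1.
Proof. by rewrite /sign; case: ifP; rewrite ?sqrrN expr1n. Qed.

Definition unit_flow (w : seq bool) : R := sign w / 2 ^+ size w.

Lemma kirchhoff_unit_flow M : kirchhoff M unit_flow.
Proof.
move=> n /andP[n_gt0 _] z; rewrite big_bool /unit_flow !sign_rcons ?size_tuple //.
by rewrite /= exprS; field; rewrite expf_neq0 // pnatr_eq0.
Qed.

Lemma edge_sum_sqr_unit_flow M : edge_sum M (fun w => unit_flow w ^+ 2) = 1 - 2 ^- M.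
Proof.
rewrite -sum_geometric_half; apply: eq_bigr => n _.
rewrite (eq_bigr (fun _ => (2 ^- n.+1) ^+ 2)); last first.
  by move=> w _; rewrite /unit_flow size_tuple expr_div_n sqr_sign div1r exprVn.
by rewrite sum_bool_tuple_const expr2 mulrA mulfV ?mul1r // expf_neq0 // pnatr_eq0.
Qed.

Definition tail_value M (w : seq bool) : R :=
  \sum_(2 <= l < M.+1) 2 ^+ (M - l) * letter R w l.

Lemma bdry_uE eps M w : bdry_u eps M w = sign w * (eps * tail_value M w + eps / 2).
Proof. by rewrite /bdry_u /sign -/(tail_value M w); case: ifP => _; ring. Qed.

Lemma sum_tail_value M :
  \sum_(w : M.-tuple bool) tail_value M w = 2 ^+ M.-1 * (2 ^+ M.-1 - 1).
Proof.
rewrite exchange_big /= big_rev_mkord subSS subn1 -sum_expr2 mulr_sumr.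
apply: eq_bigr => k _; have lt_kM := ltn_ord k.
rewrite subSS -mulr_sumr /letter sum_bool_tuple_nth; last by lia.
by rewrite subKn 1?mulrC //; lia.
Qed.

Lemma tail_value_rcons M (z : seq bool) b : (0 < size z < M)%N ->
  tail_value M (rcons z b) = tail_value M z + 2 ^+ (M - (size z).+1) * (b : nat)%:R.
Proof.
move=> /andP[z_gt0 z_ltM].
have letter_rcons l :
    letter R (rcons z b) l = letter R z l + (l == (size z).+1)%:R * (b : nat)%:R.
  rewrite /letter nth_rcons; case: ltngtP => [lt_ln | gt_ln | eq_ln].
  - by rewrite (_ : l == _ = false) /= ?mul0r ?addr0 //; apply/eqP; lia.
  - rewrite nth_default ?(ltnW gt_ln) // (_ : l == _ = false) /= ?mul0r ?addr0 //.
    by apply/eqP; lia.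
  - rewrite nth_default ?eq_ln // (_ : l == _ = true) /= ?add0r ?mul1r //.
    by apply/eqP; lia.
rewrite /tail_value (eq_bigr _ (fun l _ => congr1 _ (letter_rcons l))).
under eq_bigr do rewrite mulrDr.
rewrite big_split /=; congr (_ + _).
rewrite (bigD1_seq (size z).+1) ?mem_index_iota ?iota_uniq //=; last by lia.
by rewrite eqxx mul1r big1 ?addr0 // => l /negPf->; rewrite mul0r mulr0.
Qed.

Lemma kirchhoff_grad_of_harmonic M (h : seq bool -> R) :
  (forall n, (1 <= n < M)%N -> forall z : n.-tuple bool,
     h (rcons z false) + h (rcons z true) + h (take n.-1 z) = 3 * h z) ->
  kirchhoff M (grad h).
Proof.
move=> h_harmonic n n_range z; have := h_harmonic n n_range z.
rewrite big_bool /= /grad !parent_rcons /parent size_tuple; lra.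
Qed.

Lemma S_spr_energy M (h : seq bool -> R) : S_spr M h = 2^-1 * energy M h.
Proof.
rewrite /S_spr /energy /edge_sum; congr (_ * _); apply: eq_bigr => n _.
rewrite (sum_tuple_rcons _ (fun w => grad h w ^+ 2)); apply: eq_bigr => z _.
by rewrite big_bool /grad !parent_rcons addrC.
Qed.

Lemma edge_sum_unit_flow_grad eps M h : (0 < M)%N ->
  is_dirichlet_solution M (bdry_u eps M) h ->
  edge_sum M (fun w => unit_flow w * grad h w) = eps * 2 ^+ M.-1 / 2.
Proof.
case: M => // m _ [h_root h_leaves _].
rewrite (edge_sum_mul_grad (@kirchhoff_unit_flow _) h_root).
rewrite (eq_bigr (fun w : m.+1.-tuple bool =>
                   2 ^- m.+1 * (eps * tail_value m.+1 w + eps / 2))); last first.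
  move=> w _; rewrite h_leaves bdry_uE /unit_flow size_tuple.
  by rewrite -[RHS]mul1r -(sqr_sign w); ring.
rewrite -mulr_sumr big_split /= -mulr_sumr sum_tail_value sum_bool_tuple_const /=.
by rewrite exprS; field; rewrite expf_neq0 // pnatr_eq0.
Qed.

Definition bdry_extension eps M (w : seq bool) : R :=
  if w is [::] then 0 else bdry_u eps M w.

Lemma bdry_extensionE eps M (w : seq bool) : (0 < size w)%N ->
  bdry_extension eps M w = bdry_u eps M w.
Proof. by case: w. Qed.

Lemma grad_bdry_extension_single eps M b :
  grad (bdry_extension eps M) [:: b] = sign [:: b] * (eps / 2).
Proof.
rewrite /grad /bdry_extension /= bdry_uE subr0.
rewrite /tail_value big_nat_cond big1 ?mulr0 ?add0r // => l /andP[/andP[l_ge2 _] _].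
by rewrite /letter nth_default ?mulr0 //=; lia.
Qed.

Lemma grad_bdry_extension_rcons eps M (z : seq bool) b : (0 < size z < M)%N ->
  grad (bdry_extension eps M) (rcons z b)
    = sign z * eps * 2 ^+ (M - (size z).+1) * (b : nat)%:R.
Proof.
move=> z_range; have /andP[z_gt0 _] := z_range.
rewrite /grad parent_rcons !bdry_extensionE ?size_rcons // !bdry_uE.
by rewrite sign_rcons ?tail_value_rcons //; ring.
Qed.

Lemma energy_bdry_extension eps M : (0 < M)%N ->
  energy M (bdry_extension eps M) = eps ^+ 2 * (2^-1 + 2 ^+ M.-1 * (2 ^+ M.-1 - 1)).
Proof.
case: M => // m _; set g := bdry_extension eps m.+1.
have first_generation : \sum_(w : 1.-tuple bool) grad g w ^+ 2 = eps ^+ 2 / 2.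
  rewrite (eq_bigr (fun _ => (eps / 2) ^+ 2)); last first.
    by case=> [[|b []] ?] //; rewrite grad_bdry_extension_single exprMn sqr_sign mul1r.
  by rewrite sum_bool_tuple_const; field.
have later_generation (i : 'I_m) : \sum_(w : i.+2.-tuple bool) grad g w ^+ 2
    = eps ^+ 2 * 2 ^+ m * 2 ^+ (m - i.+1).
  rewrite (sum_tuple_rcons _ (fun w => grad g w ^+ 2)).
  rewrite (eq_bigr (fun _ => (eps * 2 ^+ (m - i.+1)) ^+ 2)); last first.
    move=> z _; rewrite big_bool /= !grad_bdry_extension_rcons ?size_tuple ?ltnS ?ltn_ord //.
    by rewrite subSS /= mulr1 mulr0 expr0n addr0 !exprMn sqr_sign mul1r.
  have split_m : (2 : R) ^+ m = 2 ^+ i.+1 * 2 ^+ (m - i.+1) by rewrite -exprD subnKC.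
  by rewrite (sum_bool_tuple_const i.+1) split_m; ring.
rewrite /energy /edge_sum big_ord_recl first_generation.
rewrite (eq_bigr _ (fun i _ => later_generation i)) -mulr_sumr.
rewrite (reindex_inj rev_ord_inj) /=.
rewrite (eq_bigr (fun i : 'I_m => (2 : R) ^+ i)) ?sum_expr2 /=; first by field.
by move=> i _; rewrite subnSK ?subKn // ltnW.
Qed.

Lemma half_le_one_sub_exp2N M : (0 < M)%N -> 2^-1 <= 1 - (2 : R) ^- M.
Proof.
case: M => // m _; rewrite exprS invfM.
have : (2 ^+ m : R)^-1 <= 1 by rewrite invf_le1 ?exprn_gt0 ?exprn_ege1 ?ler1n.
lra.
Qed.

Lemma S_spr_dirichlet_ge eps M (h : seq bool -> R) : (0 < M)%N ->
  is_dirichlet_solution M (bdry_u eps M) h ->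
  eps ^+ 2 * ((2 ^+ M.-1) ^+ 2 / (8 * (1 - 2 ^- M))) <= S_spr M h.
Proof.
move=> M_gt0 h_sol.
have T_gt0 : 0 < 1 - (2 : R) ^- M.
  by apply: lt_le_trans (half_le_one_sub_exp2N M_gt0); rewrite invr_gt0 ltr0n.
have := edge_sum_cauchy_schwarz M unit_flow (grad h).
rewrite (edge_sum_unit_flow_grad M_gt0 h_sol) edge_sum_sqr_unit_flow -/(energy M h) => cs.
by rewrite S_spr_energy mulrA ler_pdivrMr ?mulr_gt0 ?ltr0n //; lra.
Qed.

Lemma S_spr_dirichlet_le eps M (h : seq bool -> R) : (0 < M)%N ->
  is_dirichlet_solution M (bdry_u eps M) h ->
  S_spr M h <= eps ^+ 2 * ((2^-1 + 2 ^+ M.-1 * (2 ^+ M.-1 - 1)) / 2).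
Proof.
move=> M_gt0 [h_root h_leaves h_harmonic].
rewrite S_spr_energy mulrA -energy_bdry_extension // mulrC ler_wpM2r ?invr_ge0 ?ler0n //.
apply: dirichlet_principle; first exact: kirchhoff_grad_of_harmonic.
  by rewrite h_root.
by move=> w; rewrite bdry_extensionE ?h_leaves // size_tuple.
Qed.

Lemma lower_const_le M : (0 < M)%N ->
  (2 : R) ^ ((2 * M)%:Z - 6) / (1 - 2 ^- M) ^+ 2
    <= (2 ^+ M.-1) ^+ 2 / (8 * (1 - 2 ^- M)).
Proof.
move=> M_gt0; have := half_le_one_sub_exp2N M_gt0.
case: M M_gt0 => // m _ /=; set T := 1 - _ => T_ge.
have T_gt0 : 0 < T by apply: lt_le_trans T_ge; rewrite invr_gt0 ltr0n.
have -> : (2 : R) ^ ((2 * m.+1)%:Z - 6) = (2 ^+ m) ^+ 2 / 16.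
  have -> : ((2 * m.+1)%:Z - 6 = (2 * m)%:Z + (-4))%R by rewrite mulnS PoszD; ring.
  rewrite expfzDr ?pnatr_eq0 // (_ : (2 : R) ^ (-4) = (2 ^+ 4)^-1) //.
  by rewrite (_ : (2 : R) ^ (2 * m)%:Z = 2 ^+ (2 * m)) // -exprM mulnC; field.
have -> : (2 ^+ m) ^+ 2 / 16 / T ^+ 2 = (2 ^+ m) ^+ 2 / (8 * T) * (2 * T)^-1.
  by field; rewrite gt_eqF.
rewrite ler_piMr //; last by rewrite invf_le1; lra.
by apply: divr_ge0; [rewrite sqr_ge0 | lra].
Qed.

Lemma upper_const_ge M : (0 < M)%N ->
  (2^-1 + 2 ^+ M.-1 * (2 ^+ M.-1 - 1)) / 2
    <= (2 ^+ M.-1 + 2^-1) ^+ 2 / (1 - (2 : R) ^- M).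
Proof.
move=> M_gt0; have P_ge1 : (1 : R) <= 2 ^+ M.-1 by rewrite exprn_ege1 ?ler1n.
apply: le_trans (_ : _ <= (2 ^+ M.-1 + 2^-1) ^+ 2) _; first by nra.
have := half_le_one_sub_exp2N M_gt0; have : (0 : R) < 2 ^- M by rewrite invr_gt0 exprn_gt0.
by move=> q_gt0 T_ge; rewrite ler_peMr ?sqr_ge0 // invf_ge1; lra.
Qed.

End BinaryTree.

Theorem lemma2p5 (R : realFieldType) (eps : R) (M : nat) (h : seq bool -> R) :
  0 < eps -> (1 <= M)%N ->
  is_dirichlet_solution M (bdry_u eps M) h ->
  eps ^+ 2 * ((2 : R) ^ ((2 * M)%:Z - 6) / (1 - (2 : R) ^- M) ^+ 2)
    <= S_spr M h
  /\ S_spr M h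
    <= eps ^+ 2 * ((2 ^+ M.-1 + 2^-1) ^+ 2 / (1 - (2 : R) ^- M)).
Proof.
move=> _ M_gt0 h_sol; split.
  apply: le_trans (S_spr_dirichlet_ge M_gt0 h_sol).
  by rewrite ler_wpM2l ?sqr_ge0 ?lower_const_le.
apply: le_trans (S_spr_dirichlet_le M_gt0 h_sol) _.
by rewrite ler_wpM2l ?sqr_ge0 ?upper_const_ge.
Qed.
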